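(* Let $\mathfrak S=(S,\xrightarrow{F},\le)$ be an $\infty$-effective complete WSTS, and let $s_0\in S$ be bounded, i.e., such that $Post^*_{\mathfrak S}(s_0)$ is finite. Then the procedure $\mathbf{Clover}_{\mathfrak S}$ terminates on input $s_0$.
   Context: Complete WSTS: $(S,\le)$ a well partial order and continuous dcpo, $F$ a finite set of partial continuous maps (Scott-open domain, preserving lubs of directed subsets of the domain), $s\to f(s)$. $Post$: one-step successors; $Post^*$: reachability set. $F^*$: finite compositions of maps of $F$. Lub-acceleration: $\operatorname{dom}g^\infty=\operatorname{dom}g$, $g^\infty(x)=\bigvee_n g^n(x)$ if $x<g(x)$, else $g(x)$. $\infty$-effective: states finitely coded, $\le$ decidable, maps computable with decidable domains, each $g^\infty$ ($g\in F^*$) computable. Procedure $\mathbf{Clover}_{\mathfrak S}(s_0)$: $A\leftarrow\{s_0\}$; while $Post(A)\not\le^\flat A$ (where $B\le^\flat C$ iff $\downarrow B\subseteq\downarrow C$): choose fairly $(g,a)\in F^*\times A$ with $a\in\operatorname{dom}g$, set $A\leftarrow A\cup\{g^\infty(a)\}$; return $\operatorname{Max}A$. Fair: on every infinite execution, every pair $(g,a)$ with $a$ in the current $A$ and $a\in\operatorname{dom}g$ is picked later. *)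

From mathcomp Require Import all_boot.
Set Implicit Arguments. Unset Strict Implicit. Unset Printing Implicit Defensive.

Section Order.
Variables (S : Type) (le : rel S).

Definition is_ub (D : S -> Prop) (u : S) := forall d, D d -> le d u.
Definition is_lub (D : S -> Prop) (l : S) := is_ub D l /\ forall u, is_ub D u -> le l u.
Definition directed (D : S -> Prop) :=
  (exists d, D d) /\ forall x y, D x -> D y -> exists z, [/\ D z, le x z & le y z].

Definition partial_order := [/\ reflexive le, antisymmetric le & transitive le].
Definition wqo := forall f : nat -> S, exists i j, (i < j)%N /\ le (f i) (f j).
Definition well_partial_order := partial_order /\ wqo.

Definition dcpo := forall D, directed D -> exists l, is_lub D l.
Definition way_below (x y : S) :=
  forall D, directed D -> forall l, is_lub D l -> le y l -> exists d, D d /\ le x d.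
Definition continuous_dcpo :=
  dcpo /\ forall y, directed (fun x => way_below x y) /\ is_lub (fun x => way_below x y) y.

Definition scott_open (U : S -> Prop) :=
  (forall x y, U x -> le x y -> U y) /\
  forall D, directed D -> forall l, is_lub D l -> U l -> exists d, D d /\ U d.

Definition partial_continuous (dom : S -> Prop) (f : S -> S) :=
  scott_open dom /\
  forall D, directed D -> (forall d, D d -> dom d) ->
    forall l, is_lub D l -> is_lub (fun y => exists d, D d /\ y = f d) (f l).

Definition lt (x y : S) := le x y /\ x <> y.
End Order.

Section System.
Variables (S : Type) (le : rel S) (k : nat)
          (dom : 'I_k -> pred S) (app : 'I_k -> S -> S).

Definition step (x y : S) := exists f, dom f x /\ y = app f x.

Inductive reach (s0 : S) : S -> Prop :=
| reach_refl : reach s0 s0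
| reach_step x y : reach s0 x -> step x y -> reach s0 y.

Definition Post (A : S -> Prop) (y : S) := exists x, A x /\ step x y.
Definition down (A : S -> Prop) (x : S) := exists y, A y /\ le x y.
Definition le_flat (B C : S -> Prop) := forall x, down B x -> down C x.

(* F^* : the word [:: f1; ...; fn] denotes fn o ... o f1 (f1 applied first) *)
Fixpoint comp_dom (w : seq 'I_k) (x : S) : Prop :=
  if w is f :: w' then dom f x /\ comp_dom w' (app f x) else True.
Fixpoint comp_app (w : seq 'I_k) (x : S) : S :=
  if w is f :: w' then comp_app w' (app f x) else x.

Definition is_accel (w : seq 'I_k) (x y : S) :=
  (lt le x (comp_app w x) ->
     is_lub le (fun z => exists n, z = iter n (comp_app w) x) y) /\
  (~ lt le x (comp_app w x) -> y = comp_app w x).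

(* Executions of Clover: acc is the (computable) acceleration function;
   at step n the pair (gs n, as_ n) is chosen. *)
Variable acc : seq 'I_k -> S -> S.

Definition clover_set (s0 : S) (gs : nat -> seq 'I_k) (as_ : nat -> S) (n : nat) (x : S) :=
  x = s0 \/ exists m, (m < n)%N /\ x = acc (gs m) (as_ m).

Definition clover_infinite_fair_run (s0 : S) (gs : nat -> seq 'I_k) (as_ : nat -> S) :=
  (forall n, [/\ ~ le_flat (Post (clover_set s0 gs as_ n)) (clover_set s0 gs as_ n),
                 clover_set s0 gs as_ n (as_ n) & comp_dom (gs n) (as_ n)]) /\
  (forall i w a, clover_set s0 gs as_ i a -> comp_dom w a ->
     exists j, [/\ (i <= j)%N, gs j = w & as_ j = a]).

Definition clover_terminates (s0 : S) :=
  forall gs as_, ~ clover_infinite_fair_run s0 gs as_.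
End System.

(* Every state added by Clover is reachable from s0: a proper acceleration
   g^oo(a) is the lub of the Kleene chain a <= g a <= g (g a) <= ..., which
   lives in the finite set Post^*(s0), hence becomes constant and has its lub
   among its members.  So the sets A_n grow inside a finite set and are
   eventually equal to some A_N.  By fairness every pair (f, a) with a in A_N
   is picked later, and f(a) <= f^oo(a) lies in A_N again; thus
   Post(A_N) <=^flat A_N and the loop is exited at step N. *)

From mathcomp Require Import all_boot.
From mathcomp Require Import zify.
From Stdlib Require Import Classical.
Set Implicit Arguments. Unset Strict Implicit.

Lemma is_lub_unique (S : Type) (le : rel S) (D : S -> Prop) (l l' : S) :
  antisymmetric le -> is_lub le D l -> is_lub le D l' -> l = l'.
Proof.
move=> asym [ub least] [ub' least']; apply: asym.
by rewrite (least _ ub') (least' _ ub).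
Qed.

Lemma kleene_chain_finite_lub (S : eqType) (le : rel S) (g : S -> S)
    (a : S) (l : seq S) :
  partial_order le ->
  (forall n, le (iter n g a) (iter n.+1 g a)) ->
  (forall n, iter n g a \in l) ->
  exists i, is_lub le (fun z => exists n, z = iter n g a) (iter i g a).
Proof.
move=> [refl asym trans] chain in_l; set c := fun n => iter n g a.
have c_mono i j : (i <= j)%N -> le (c i) (c j).
  move=> /subnK <-; elim: (j - i) => [|d IH]; first by rewrite add0n refl.
  by rewrite addSn; apply: trans IH (chain _).
have [i c_fix] : exists i, c i.+1 = c i.
  have: ~~ uniq (mkseq c (size l).+1).
    apply/negP => /uniq_leq_size le_size.
    suff: (size (mkseq c (size l).+1) <= size l)%N by rewrite size_mkseq ltnn.
    by apply: le_size => x /mapP [n _ ->]; apply: in_l.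
  move=> /(uniqPn a) [i [j [ij]]]; rewrite size_mkseq => jl.
  rewrite !nth_mkseq; try lia.
  move=> cij; exists i; apply: asym; rewrite chain andbT cij.
  by apply: c_mono; lia.
have c_stat n : c (n + i) = c i.
  by elim: n => [|n IH] //; rewrite addSn /c iterS -/(c _) IH.
exists i; split=> [_ [n ->]|u]; last by apply; exists i.
case: (leqP n i) => [ni|/ltnW ni]; first exact: c_mono.
by rewrite -(subnK ni) -/(c _) c_stat refl.
Qed.

Lemma nondecreasing_bounded_stationary (P : nat -> nat) (B : nat) :
  {homo P : n m / (n <= m)%N} -> (forall n, (P n <= B)%N) ->
  exists N, forall n, (N <= n)%N -> P n = P N.
Proof.
move=> mono bound.
suff gap d N : (B - P N <= d)%N -> exists N', forall n, (N' <= n)%N -> P n = P N'.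
  exact: (gap B 0 (leq_subr _ _)).
elim: d N => [|d IH] N gapN.
  exists N => n Nn; have := mono _ _ Nn; have := bound n; lia.
case: (classic (forall n, (N <= n)%N -> P n = P N)) => [stable|unstable].
  by exists N.
have [n not_stable_n] := not_all_ex_not _ _ unstable.
have [Nn PnN] := imply_to_and _ _ not_stable_n.
apply: (IH n).
have := mono _ _ Nn; have := bound n; lia.
Qed.

Lemma subset_chain_stationary (T : eqType) (L : nat -> seq T) (l : seq T) :
  (forall n m, (n <= m)%N -> {subset L n <= L m}) ->
  (forall n, {subset L n <= l}) ->
  exists N, forall n, (N <= n)%N -> {subset L n <= L N}.
Proof.
move=> mono bound; pose P n := size (undup (L n)).
have [N PN] : exists N, forall n, (N <= n)%N -> P n = P N.
  apply: (@nondecreasing_bounded_stationary P (size l)) => [n m nm|n];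
    apply: uniq_leq_size (undup_uniq (L n)) _ => x; rewrite mem_undup.
    by rewrite mem_undup; apply: mono.
  exact: bound.
exists N => n Nn x.
have sub : {subset undup (L N) <= undup (L n)}.
  by move=> y; rewrite !mem_undup; apply: mono.
have [_ same] := uniq_min_size (undup_uniq _) sub (eq_leq (PN n Nn)).
by rewrite -[x \in L n]mem_undup -same mem_undup.
Qed.

(* Continuity is only used through monotonicity: f preserves the lub [y] of
   the directed set {x, y}. *)
Lemma partial_continuous_mono (S : Type) (le : rel S) (dom : S -> Prop)
    (f : S -> S) (x y : S) :
  reflexive le -> partial_continuous le dom f -> dom x -> le x y ->
  dom y /\ le (f x) (f y).
Proof.
move=> refl [[dom_up _] f_lub] dx xy; have dy := dom_up x y dx xy.
split=> //; pose D z := z = x \/ z = y.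
have dirD : directed le D.
  split=> [|u v Du Dv]; first by exists x; left.
  by exists y; split; [right | case: Du => -> | case: Dv => ->].
have lubD : is_lub le D y by split=> [d [] ->|u]; [| |apply; right].
have domD d : D d -> dom d by case=> ->.
have [ub _] := f_lub D dirD domD y lubD.
by apply: ub; exists x; split=> //; left.
Qed.

Section Acceleration.
Variables (S : eqType) (le : rel S) (k : nat)
          (dom : 'I_k -> pred S) (app : 'I_k -> S -> S) (acc : seq 'I_k -> S -> S).
Hypothesis le_po : partial_order le.
Let le_refl : reflexive le. Proof. by case: le_po. Qed.
Hypothesis app_cont : forall f : 'I_k, partial_continuous le (fun x => dom f x) (app f).
Hypothesis acc_accel : forall w x, comp_dom dom app w x -> is_accel le app w x (acc w x).

Lemma comp_mono w x y : comp_dom dom app w x -> le x y ->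
  comp_dom dom app w y /\ le (comp_app app w x) (comp_app app w y).
Proof.
elim: w x y => [|f w IH] x y //= [dx cx] xy.
have [dy fxy] := partial_continuous_mono le_refl (app_cont f) dx xy.
by have [] := IH _ _ cx fxy.
Qed.

Lemma reach_comp_app s0 w x : reach dom app s0 x -> comp_dom dom app w x ->
  reach dom app s0 (comp_app app w x).
Proof.
elim: w x => [|f w IH] x //= rx [dx cx].
by apply: IH cx; apply: reach_step rx _; exists f.
Qed.

Lemma comp_app_le_acc w a : comp_dom dom app w a -> le (comp_app app w a) (acc w a).
Proof.
move=> ca; have [acc_lub acc_id] := acc_accel ca.
case: (classic (lt le a (comp_app app w a))) => [/acc_lub [ub _]|/acc_id ->].
  by apply: ub; exists 1.
exact: le_refl.
Qed.

Lemma reach_acc (l : seq S) s0 w a :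
  (forall x, reach dom app s0 x -> x \in l) ->
  reach dom app s0 a -> comp_dom dom app w a -> reach dom app s0 (acc w a).
Proof.
move=> reach_l ra ca; have [acc_lub acc_id] := acc_accel ca.
case: (classic (lt le a (comp_app app w a))) => [a_lt|/acc_id ->]; last first.
  exact: reach_comp_app.
set g := comp_app app w.
have chain n : comp_dom dom app w (iter n g a) /\ le (iter n g a) (iter n.+1 g a).
  elim: n => [|n [cn ln]]; first by split=> //; case: a_lt.
  exact: comp_mono.
have reach_iter n : reach dom app s0 (iter n g a).
  by elim: n => [|n IH] //=; apply: reach_comp_app IH (proj1 (chain n)).
have [i lub_i] := kleene_chain_finite_lub le_po (fun n => proj2 (chain n))
  (fun n => reach_l _ (reach_iter n)).
case: le_po => _ anti _.
by rewrite (is_lub_unique anti (acc_lub a_lt) lub_i).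
Qed.

End Acceleration.

Section Clover.
Variables (S : eqType) (le : rel S) (k : nat)
          (dom : 'I_k -> pred S) (app : 'I_k -> S -> S) (acc : seq 'I_k -> S -> S)
          (s0 : S) (gs : nat -> seq 'I_k) (as_ : nat -> S).

Definition clover_seq n := s0 :: [seq acc (gs m) (as_ m) | m <- iota 0 n].

Lemma clover_setP n x : clover_set acc s0 gs as_ n x <-> x \in clover_seq n.
Proof.
rewrite inE; split=> [[->|[m [mn ->]]]|/orP[/eqP->|/mapP[m]]].
- by rewrite eqxx.
- by apply/orP; right; apply/mapP; exists m; rewrite // mem_iota.
- by left.
- by rewrite mem_iota => mn ->; right; exists m; split=> //; lia.
Qed.

Lemma clover_seq_mono n m : (n <= m)%N -> {subset clover_seq n <= clover_seq m}.
Proof.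
move=> nm x /clover_setP [->|[j [jn ->]]]; apply/clover_setP; first by left.
by right; exists j; split=> //; lia.
Qed.

Hypothesis run : clover_infinite_fair_run le dom app acc s0 gs as_.

Lemma reach_clover_seq (l : seq S) :
  partial_order le ->
  (forall f : 'I_k, partial_continuous le (fun x => dom f x) (app f)) ->
  (forall w x, comp_dom dom app w x -> is_accel le app w x (acc w x)) ->
  (forall x, reach dom app s0 x -> x \in l) ->
  forall n x, x \in clover_seq n -> reach dom app s0 x.
Proof.
move=> le_po app_cont acc_accel reach_l; elim=> [|n IH] x.
  by rewrite inE => /eqP ->; constructor.
move=> /clover_setP [->|[m []]]; first by constructor.
rewrite ltnS leq_eqVlt => /orP [/eqP -> ->|mn ->].
  have [_ /clover_setP an cn] := run.1 n.
  exact: (reach_acc le_po app_cont acc_accel reach_l (IH _ an) cn).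
by apply: IH; apply/clover_setP; right; exists m.
Qed.

(* Fairness only matters for one-letter words [:: f]: their accelerations
   dominate the one-step successors. *)
Lemma le_flat_post_stationary_clover_set N :
  partial_order le ->
  (forall w x, comp_dom dom app w x -> is_accel le app w x (acc w x)) ->
  (forall n, (N <= n)%N -> {subset clover_seq n <= clover_seq N}) ->
  le_flat le (Post dom app (clover_set acc s0 gs as_ N)) (clover_set acc s0 gs as_ N).
Proof.
move=> le_po acc_accel stat x [_ [[z [Az [f [dz ->]]]] xy]].
have cz : comp_dom dom app [:: f] z by [].
have [j [Nj gj aj]] := run.2 N [:: f] z Az cz.
exists (acc [:: f] z); split.
  apply/clover_setP/(stat j.+1); first lia.
  by apply/clover_setP; right; exists j; rewrite gj aj.
case: (le_po) => _ _ trans; apply: trans xy _.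
exact: (comp_app_le_acc le_po acc_accel cz).
Qed.

End Clover.

Theorem lemma5p7 (S : countType) (le : rel S) (k : nat)
    (dom : 'I_k -> pred S) (app : 'I_k -> S -> S)
    (acc : seq 'I_k -> S -> S) (s0 : S) :
  well_partial_order le ->
  continuous_dcpo le ->
  (forall f : 'I_k, partial_continuous le (fun x => dom f x) (app f)) ->
  (forall w x, comp_dom dom app w x -> is_accel le app w x (acc w x)) ->
  (exists l : seq S, forall x, reach dom app s0 x -> x \in l) ->
  clover_terminates le dom app acc s0.
Proof.
move=> [le_po _] _ app_cont acc_accel [l reach_l] gs as_ run.
have [N stat] : exists N, forall n, (N <= n)%N ->
    {subset clover_seq acc s0 gs as_ n <= clover_seq acc s0 gs as_ N}.
  apply: subset_chain_stationary => [n m|n x xn]; first exact: clover_seq_mono.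
  exact/reach_l/(reach_clover_seq run le_po app_cont acc_accel reach_l xn).
have [not_covered _ _] := run.1 N.
exact/not_covered/(le_flat_post_stationary_clover_set run le_po acc_accel stat).
Qed.
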